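(* Let $T,S\in\mathcal{B}_A(\mathcal{H})$. Then $$\omega_A(T+S)\le\sqrt{\omega_A^2(T)+\omega_A^2(S)+\tfrac12\big\|T^{\sharp_A}T+SS^{\sharp_A}\big\|_A+\omega_A(ST)}.$$
   Context: $\mathcal{H}$ is a complex Hilbert space with inner product $\langle\cdot,\cdot\rangle$, and $A$ is a fixed nonzero positive bounded operator on $\mathcal{H}$. Set $\langle x,y\rangle_A=\langle Ax,y\rangle$ and $\|x\|_A=\|A^{1/2}x\|$. $\mathcal{B}_A(\mathcal{H})$ is the set of bounded operators $T$ for which there exists a bounded $S$ with $\langle Tx,y\rangle_A=\langle x,Sy\rangle_A$ for all $x,y$ (equivalently $\mathcal{R}(T^*A)\subseteq\mathcal{R}(A)$). For $T\in\mathcal{B}_A(\mathcal{H})$, $T^{\sharp_A}=A^\dagger T^*A$ ($A^\dagger$ the Moore–Penrose inverse) is the reduced solution of $AX=T^*A$. For an operator $T$ with $\|Tx\|_A\le\lambda\|x\|_A$ for some $\lambda>0$ and all $x$, $\|T\|_A=\sup\{\|Tx\|_A: \|x\|_A=1\}$, and $\omega_A(T)=\sup\{|\langle Tx,x\rangle_A|:\|x\|_A=1\}$. *)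

From HB Require Import structures.
From mathcomp Require Import all_boot all_order all_algebra.
From mathcomp Require Import complex.
From mathcomp Require Import boolp classical_sets reals.
Set Implicit Arguments. Unset Strict Implicit. Unset Printing Implicit Defensive.
Import Order.TTheory GRing.Theory Num.Theory.
Local Open Scope ring_scope.
Local Open Scope classical_set_scope.

Section Hilbert.
Variables (R : realType) (V : lmodType R[i]) (ip : V -> V -> R[i]).

Definition vnorm (x : V) : R := Num.sqrt (complex.Re (ip x x)).

Definition is_inner_product : Prop :=
  [/\ (forall (a : R[i]) (x y z : V), ip (a *: x + y) z = a * ip x z + ip y z),
      (forall x y : V, ip y x = conjc (ip x y)),
      (forall x : V, complex.Im (ip x x) = 0 /\ 0 <= complex.Re (ip x x)) &
      (forall x : V, ip x x = 0 -> x = 0)].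

Definition is_complete : Prop :=
  forall u : nat -> V,
    (forall e : R, 0 < e -> exists N : nat, forall m n : nat,
        (N <= m)%N -> (N <= n)%N -> vnorm (u m - u n) < e) ->
    exists l : V, forall e : R, 0 < e -> exists N : nat, forall n : nat,
        (N <= n)%N -> vnorm (u n - l) < e.

Definition is_hilbert : Prop := is_inner_product /\ is_complete.

Definition bounded_op (T : V -> V) : Prop :=
  (forall (a : R[i]) (x y : V), T (a *: x + y) = a *: T x + T y) /\
  exists c : R, forall x : V, vnorm (T x) <= c * vnorm x.

Definition positive_op (A : V -> V) : Prop :=
  bounded_op A /\ forall x : V, complex.Im (ip (A x) x) = 0 /\ 0 <= complex.Re (ip (A x) x).

Variable A : V -> V.

Definition ipA (x y : V) : R[i] := ip (A x) y.
Definition normA (x : V) : R := Num.sqrt (complex.Re (ipA x x)).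

Definition in_BA (T : V -> V) : Prop :=
  bounded_op T /\ exists S : V -> V, bounded_op S /\
    forall x y : V, ipA (T x) y = ipA x (S y).

(* X = T^{#_A} = A^dagger T^* A : the reduced solution of A X = T^* A, i.e.
   the bounded solution X of A X = T^* A with range in the closure of R(A).
   A X = T^* A is written through the defining property of the adjoint T^*. *)
Definition is_Asharp (T X : V -> V) : Prop :=
  [/\ bounded_op X,
      (forall x y : V, ip (A (X x)) y = ip (A x) (T y)) &
      (forall x : V, forall e : R, 0 < e -> exists y : V, vnorm (X x - A y) < e)].

Definition cmod (z : R[i]) : R := Num.sqrt (complex.Re z ^+ 2 + complex.Im z ^+ 2).

Definition A_unit_sphere : set V := [set x | normA x = 1].

Definition opnormA (T : V -> V) : R := sup [set normA (T x) | x in A_unit_sphere].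

Definition omegaA (T : V -> V) : R :=
  sup [set cmod (ipA (T x) x) | x in A_unit_sphere].

End Hilbert.

(* For an
   A-unit vector x put a = |<T x, x>_A| and b = |<S x, x>_A| = |<x, S^# x>_A|.  Then
   |<(T + S) x, x>_A|^2 <= a^2 + b^2 + 2 a b, and Buzano's inequality gives
     2 a b <= ||T x||_A ||S^# x||_A + |<T x, S^# x>_A|
           <= (||T x||_A^2 + ||S^# x||_A^2) / 2 + |<S T x, x>_A|,
   where ||T x||_A^2 + ||S^# x||_A^2 = Re <(T^# T + S S^#) x, x>_A <= ||(T^# T + S S^#) x||_A.
   Taking suprema needs operators of B_A(H) to be bounded for the A-seminorm: for
   B = T' T, with T' an A-adjoint of T, one has ||B^m x||_A^2 <= ||B^(2m) x||_A ||x||_A,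
   and iterating along powers of two against the norm bound ||B^m|| <= ||B||^m forces
   ||B x||_A <= ||B|| ||x||_A, hence ||T x||_A^2 <= ||B|| ||x||_A^2. *)

From HB Require Import structures.
From mathcomp Require Import all_boot all_order all_algebra.
From mathcomp Require Import complex.
From mathcomp Require Import boolp classical_sets reals.
From mathcomp Require Import ring lra.
Import Order.TTheory GRing.Theory Num.Theory.
Set Implicit Arguments.
Unset Strict Implicit.
Unset Printing Implicit Defensive.
Local Open Scope ring_scope.

Section ComplexModulus.
Variable R : realType.
Implicit Types z w : R[i].

Lemma complex_eq z w : complex.Re z = complex.Re w -> complex.Im z = complex.Im w -> z = w.
Proof. by case: z => a b; case: w => c d /= -> ->. Qed.

Lemma ReM z w :
  complex.Re (z * w) = complex.Re z * complex.Re w - complex.Im z * complex.Im w.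
Proof. by case: z; case: w. Qed.

Lemma ImM z w :
  complex.Im (z * w) = complex.Re z * complex.Im w + complex.Im z * complex.Re w.
Proof. by case: z => a b; case: w => c d /=; ring. Qed.

Lemma ReJ z : complex.Re z^*%C = complex.Re z. Proof. by case: z. Qed.
Lemma ImJ z : complex.Im z^*%C = - complex.Im z. Proof. by case: z. Qed.

Lemma cmodE z : cmod z = Normc.normc z. Proof. by case: z. Qed.

Lemma cmod_ge0 z : 0 <= cmod z. Proof. exact: sqrtr_ge0. Qed.

Lemma cmodD z w : cmod (z + w) <= cmod z + cmod w.
Proof. by rewrite !cmodE; exact: le_normcD. Qed.

Lemma cmodM z w : cmod (z * w) = cmod z * cmod w.
Proof. by rewrite !cmodE; exact: Normc.normcM. Qed.

Lemma cmodN z : cmod (- z) = cmod z.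
Proof. by rewrite !cmodE; exact: normcN. Qed.

Lemma cmod_natr n : cmod (n%:R : R[i]) = n%:R.
Proof. by rewrite cmodE normcMn Normc.normc1. Qed.

Lemma Re_le_cmod z : complex.Re z <= cmod z.
Proof.
rewrite /cmod; apply: le_trans (ler_wsqrtr (_ : complex.Re z ^+ 2 <= _)).
  by rewrite sqrtr_sqr ler_norm.
by rewrite lerDl sqr_ge0.
Qed.

End ComplexModulus.

Lemma le_mul_of_quadratic_ge0 (R : realFieldType) (a c n : R) : 0 <= a -> 0 <= c ->
  (forall t, 0 <= a - 2 * t * n + t ^+ 2 * n * c) -> n <= a * c.
Proof.
move=> a0 c0 quad; have [c_gt0|c_le0] := ltrP 0 c.
  have := mulr_ge0 (quad c^-1) (ltW c_gt0).
  have -> : (a - 2 * c^-1 * n + c^-1 ^+ 2 * n * c) * c = a * c - n.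
    by field; rewrite gt_eqF.
  by rewrite subr_ge0.
have c_eq0 : c = 0 by apply/le_anti; rewrite c_le0 c0.
subst c; rewrite mulr0 leNgt; apply/negP => n_gt0.
have := quad ((a + 1) / (2 * n)); rewrite mulr0 addr0.
have -> : 2 * ((a + 1) / (2 * n)) * n = a + 1 by field; rewrite gt_eqF.
lra.
Qed.

Lemma le_of_sqr_le (R : realDomainType) (x y : R) : 0 <= y -> x ^+ 2 <= y ^+ 2 -> x <= y.
Proof.
move=> y0; have [x0|/ltW x_le0 _] := leP 0 x; last exact: le_trans x_le0 y0.
by rewrite ler_sqr ?nnegE.
Qed.

(* A sequence with [u m ^+ 2 <= u (2 m)] satisfies [1 + 2 ^ n (u 1 - 1) <= u (2 ^ n)],
   which is unbounded unless [u 1 <= 1]. *)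
Lemma le1_of_sqr_le_double (R : archiRealFieldType) (u : nat -> R) (M : R) :
  (forall m, u m ^+ 2 <= u (m + m)%N) -> (forall m, u m <= M) -> u 1%N <= 1.
Proof.
move=> u_sqr u_le; rewrite leNgt; apply/negP => u1_gt1.
set h := u 1%N - 1.
have h_gt0 : 0 < h by rewrite subr_gt0.
have grow n : 1 + (2 ^ n)%:R * h <= u (2 ^ n)%N.
  elim: n => [|n IH]; first by rewrite expn0 mul1r /h addrC subrK.
  rewrite expnS mul2n -addnn natrD; apply: le_trans (u_sqr _).
  have : 0 <= (2 ^ n)%:R * h :> R by rewrite mulr_ge0 ?ler0n ?ltW.
  nra.
have M_gt1 : 1 < M := lt_le_trans u1_gt1 (u_le 1%N).
have M_ge0 : 0 <= M / h by rewrite divr_ge0 ?ltW // (lt_trans ltr01).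
set n := Num.bound (M / h).
have nM : M < n%:R * h by rewrite -ltr_pdivrMr // archi_boundP.
have n2n : n%:R <= (2 ^ n)%:R :> R by rewrite ler_nat ltnW // ltn_expl.
have := le_trans (grow n) (u_le _).
have := ler_wpM2r (ltW h_gt0) n2n.
lra.
Qed.

Section BoundedWrt.
Variables (R : realDomainType) (U : zmodType) (N : U -> R).
Hypothesis N_ge0 : forall u, 0 <= N u.

Definition bounded_wrt (X : U -> U) : Prop :=
  exists2 c : R, 0 <= c & forall u, N (X u) <= c * N u.

Lemma bounded_wrtP (X : U -> U) :
  (exists c, forall u, N (X u) <= c * N u) -> bounded_wrt X.
Proof.
move=> [c Xc]; exists `|c|; first exact: normr_ge0.
by move=> u; apply: le_trans (Xc u) (ler_wpM2r (N_ge0 u) (ler_norm c)).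
Qed.

Lemma bounded_wrt_comp (X Y : U -> U) :
  bounded_wrt X -> bounded_wrt Y -> bounded_wrt (fun u => Y (X u)).
Proof.
move=> [cX cX0 Xc] [cY cY0 Yc]; exists (cY * cX); first exact: mulr_ge0.
by move=> u; rewrite -mulrA; apply: le_trans (Yc _) (ler_wpM2l cY0 (Xc u)).
Qed.

Lemma bounded_wrt_iter (X : U -> U) : bounded_wrt X ->
  exists2 c : R, 0 <= c & forall m u, N (iter m X u) <= c ^+ m * N u.
Proof.
move=> [c c0 Xc]; exists c => // m u; elim: m => [|m IH]; first by rewrite mul1r.
by rewrite iterS exprS -mulrA; apply: le_trans (Xc _) (ler_wpM2l c0 IH).
Qed.

Lemma bounded_wrt_add (X Y : U -> U) : (forall u v, N (u + v) <= N u + N v) ->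
  bounded_wrt X -> bounded_wrt Y -> bounded_wrt (fun u => X u + Y u).
Proof.
move=> N_add [cX cX0 Xc] [cY cY0 Yc]; exists (cX + cY); first exact: addr_ge0.
by move=> u; rewrite mulrDl; apply: le_trans (N_add _ _) (lerD (Xc u) (Yc u)).
Qed.

End BoundedWrt.

Section SemiInnerProduct.
Variables (R : realType) (V : lmodType R[i]) (f : V -> V -> R[i]).
Hypothesis f_linear : forall (a : R[i]) x y z, f (a *: x + y) z = a * f x z + f y z.
Hypothesis f_hermitian : forall x y, f y x = (f x y)^*%C.
Hypothesis f_ge0 : forall x, complex.Im (f x x) = 0 /\ 0 <= complex.Re (f x x).
Local Notation nf := (vnorm f).

Lemma sip_addl x y z : f (x + y) z = f x z + f y z.
Proof. by have := f_linear 1 x y z; rewrite scale1r mul1r. Qed.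

Lemma sip0l z : f 0 z = 0.
Proof. by apply: (addrI (f 0 z)); rewrite -sip_addl !addr0. Qed.

Lemma sip_scalel a x z : f (a *: x) z = a * f x z.
Proof. by have := f_linear a x 0 z; rewrite addr0 sip0l addr0. Qed.

Lemma sip_subl x y z : f (x - y) z = f x z - f y z.
Proof. by rewrite sip_addl -scaleN1r sip_scalel mulN1r. Qed.

Lemma sip_addr x y z : f z (x + y) = f z x + f z y.
Proof. by rewrite f_hermitian sip_addl rmorphD /= -!f_hermitian. Qed.

Lemma sip_scaler a x z : f z (a *: x) = a^*%C * f z x.
Proof. by rewrite f_hermitian sip_scalel rmorphM /= -f_hermitian. Qed.

Lemma sip_subr x y z : f z (x - y) = f z x - f z y.
Proof. by rewrite f_hermitian sip_subl rmorphB /= -!f_hermitian. Qed.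

Lemma sip_real x : ((complex.Re (f x x))%:C)%C = f x x.
Proof. by apply: complex_eq => //=; rewrite (f_ge0 x).1. Qed.

Lemma vnorm_ge0 x : 0 <= nf x. Proof. exact: sqrtr_ge0. Qed.

Lemma sqr_vnorm x : nf x ^+ 2 = complex.Re (f x x).
Proof. exact: sqr_sqrtr (f_ge0 x).2. Qed.

Lemma sip_expand_sub u v c : f (u - c *: v) (u - c *: v) =
  f u u - c^*%C * f u v - c * f v u + c * c^*%C * f v v.
Proof. rewrite sip_subl !sip_subr !sip_scalel !sip_scaler; ring. Qed.

Lemma cauchy_schwarz u v : cmod (f u v) <= nf u * nf v.
Proof.
set z := f u v.
suff : complex.Re z ^+ 2 + complex.Im z ^+ 2 <= complex.Re (f u u) * complex.Re (f v v).
  by rewrite /cmod /vnorm -sqrtrM ?(f_ge0 u).2 //; exact: ler_wsqrtr.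
apply: le_mul_of_quadratic_ge0; [exact: (f_ge0 u).2 | exact: (f_ge0 v).2 |].
move=> t; have := (f_ge0 (u - (t%:C%C * z) *: v)).2.
rewrite sip_expand_sub (f_hermitian u v) -/z.
rewrite !(raddfD, raddfN) /= !(ReM, ImM, ReJ, ImJ) /= (f_ge0 v).1.
by move=> /le_trans; apply; rewrite le_eqVlt; apply/orP; left; apply/eqP; ring.
Qed.

Lemma Re_sip_le u v : complex.Re (f u v) <= nf u * nf v.
Proof. exact: le_trans (Re_le_cmod _) (cauchy_schwarz u v). Qed.

(* Cauchy-Schwarz for [a] and the reflection [b - 2 <b, e> e] of [b], which has the
   norm of [b]. *)
Lemma buzano a e b : complex.Re (f e e) = 1 ->
  2 * cmod (f a e * f e b) <= nf a * nf b + cmod (f a b).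
Proof.
move=> e1; have fee : f e e = 1 by rewrite -sip_real e1.
set w := b - (2 * f b e) *: e.
have nw : nf w = nf b.
  rewrite /vnorm /w sip_expand_sub fee (f_hermitian b e) rmorphM rmorph_nat /=.
  by congr (Num.sqrt (complex.Re _)); ring.
have faw : f a w = f a b - 2 * (f a e * f e b).
  by rewrite /w sip_subr sip_scaler rmorphM rmorph_nat /= -f_hermitian; ring.
have := cauchy_schwarz a w; rewrite nw faw.
have := cmodD (- (f a b - 2 * (f a e * f e b))) (f a b).
rewrite cmodN opprB subrK cmodM cmod_natr.
lra.
Qed.

Lemma vnormD u v : nf (u + v) <= nf u + nf v.
Proof.
apply: le_of_sqr_le; first by rewrite addr_ge0 ?vnorm_ge0.
rewrite sqr_vnorm sip_addl !sip_addr (f_hermitian u v) !raddfD /= ReJ sqrrD -!sqr_vnorm.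
have := Re_sip_le u v; lra.
Qed.

Lemma sip_iter_selfadjoint (B : V -> V) : (forall u v, f (B u) v = f u (B v)) ->
  forall i j x, f (iter i B x) (iter j B x) = f (iter (i + j) B x) x.
Proof.
move=> B_sa i j x; elim: j i => [|j IH] i; first by rewrite addn0.
by rewrite iterS -B_sa -iterS IH addSnnS.
Qed.

(* The seminorms [a m] of [B^m x] satisfy [a m ^+ 2 <= a (2 m) * a 0]; normalised by
   [D ^+ m * a 0] they stay bounded, so [le1_of_sqr_le_double] applies. *)
Lemma vnorm_selfadjoint_le (B : V -> V) (C D : R) x :
  (forall u v, f (B u) v = f u (B v)) -> 0 <= D ->
  (forall m, nf (iter m B x) <= C * D ^+ m) -> nf (B x) <= D * nf x.
Proof.
move=> B_sa D_ge0 B_growth.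
have sqr_le m : nf (iter m B x) ^+ 2 <= nf (iter (m + m) B x) * nf x.
  by rewrite sqr_vnorm sip_iter_selfadjoint //; exact: Re_sip_le.
have := vnorm_ge0 x; rewrite le_eqVlt => /orP[/eqP x0|x_gt0].
  rewrite -x0 mulr0; apply: le_of_sqr_le => //.
  by have := sqr_le 1%N; rewrite -x0 mulr0 expr0n.
have := D_ge0; rewrite le_eqVlt => /orP[/eqP D0|D_gt0].
  by have := B_growth 1%N; rewrite -D0 expr1 !mulr0 mul0r.
pose u m := nf (iter m B x) / (D ^+ m * nf x).
have scale_gt0 m : 0 < D ^+ m * nf x by rewrite mulr_gt0 ?exprn_gt0.
suff : u 1%N <= 1 by rewrite ler_pdivrMr // mul1r expr1.
apply: (@le1_of_sqr_le_double _ u (C / nf x)) => m.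
  rewrite expr_div_n ler_pdivrMr ?exprn_gt0 //.
  have -> : nf (iter (m + m) B x) / (D ^+ (m + m) * nf x) * (D ^+ m * nf x) ^+ 2
           = nf (iter (m + m) B x) * nf x.
    by rewrite exprD; field; rewrite !gt_eqF ?exprn_gt0.
  exact: sqr_le.
rewrite ler_pdivrMr // (_ : C / nf x * (D ^+ m * nf x) = C * D ^+ m) //.
by field; rewrite gt_eqF.
Qed.

Lemma vnorm_adjoint_bounded (N : V -> R) (k : R) (X Y : V -> V) :
  (forall u, 0 <= N u) -> (forall u, nf u <= k * N u) ->
  (forall x y, f (X x) y = f x (Y y)) ->
  bounded_wrt N X -> bounded_wrt N Y -> bounded_wrt nf X.
Proof.
move=> N_ge0 nf_le XY_adj bX bY.
have [D D_ge0 YX_iter] := bounded_wrt_iter (bounded_wrt_comp bX bY).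
have YX_sa u v : f (Y (X u)) v = f u (Y (X v)).
  by rewrite f_hermitian -XY_adj -f_hermitian XY_adj.
exists (Num.sqrt D) => [|x]; first exact: sqrtr_ge0.
have YX_growth m : nf (iter m (fun u => Y (X u)) x) <= `|k| * N x * D ^+ m.
  apply: le_trans (nf_le _) _; apply: le_trans (ler_wpM2r (N_ge0 _) (ler_norm k)) _.
  rewrite -mulrA [N x * _]mulrC; apply: ler_wpM2l; [exact: normr_ge0 | exact: YX_iter].
have YX_le := vnorm_selfadjoint_le YX_sa D_ge0 YX_growth.
apply: le_of_sqr_le; first by rewrite mulr_ge0 ?sqrtr_ge0 ?vnorm_ge0.
rewrite sqr_vnorm exprMn sqr_sqrtr // XY_adj f_hermitian ReJ.
apply: le_trans (Re_sip_le _ _) _.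
rewrite expr2 mulrA; apply: ler_wpM2r; [exact: vnorm_ge0 | exact: YX_le].
Qed.

Lemma sqr_cmod_sum_le (T S Tsh Ssh : V -> V) x : complex.Re (f x x) = 1 ->
  (forall u y, f (Tsh u) y = f u (T y)) -> (forall u y, f (Ssh u) y = f u (S y)) ->
  cmod (f (T x + S x) x) ^+ 2 <= cmod (f (T x) x) ^+ 2 + cmod (f (S x) x) ^+ 2
     + 2^-1 * nf (Tsh (T x) + S (Ssh x)) + cmod (f (S (T x)) x).
Proof.
move=> x1 Tsh_adj Ssh_adj.
have nx : nf x = 1 by rewrite /vnorm x1 sqrtr1.
set a := cmod (f (T x) x); set b := cmod (f (S x) x).
have sum_le : cmod (f (T x + S x) x) <= a + b by rewrite sip_addl; exact: cmodD.
have Sx : f (S x) x = f x (Ssh x) by rewrite (f_hermitian (Ssh x) x) Ssh_adj -f_hermitian.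
have STx : f (T x) (Ssh x) = f (S (T x)) x by rewrite f_hermitian Ssh_adj -f_hermitian.
have cross := buzano (T x) (Ssh x) x1.
rewrite -Sx STx cmodM -/a -/b in cross.
have Tx2 : nf (T x) ^+ 2 = complex.Re (f (Tsh (T x)) x) by rewrite sqr_vnorm Tsh_adj.
have Sshx2 : nf (Ssh x) ^+ 2 = complex.Re (f (S (Ssh x)) x).
  by rewrite sqr_vnorm Ssh_adj f_hermitian ReJ.
have sum2_le : nf (T x) ^+ 2 + nf (Ssh x) ^+ 2 <= nf (Tsh (T x) + S (Ssh x)).
  rewrite Tx2 Sshx2 -raddfD /= -sip_addl.
  by have := Re_sip_le (Tsh (T x) + S (Ssh x)) x; rewrite nx mulr1.
have amgm := (leif_mean_square (nf (T x)) (nf (Ssh x))).1.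
have sum_sqr_le : cmod (f (T x + S x) x) ^+ 2 <= (a + b) ^+ 2.
  by rewrite !expr2; exact: (ler_pM (cmod_ge0 _) (cmod_ge0 _) sum_le sum_le).
rewrite sqrrD in sum_sqr_le.
lra.
Qed.

End SemiInnerProduct.

Lemma hermitian_of_real_diag (R : realType) (V : lmodType R[i]) (g : V -> V -> R[i]) :
  (forall x y z, g (x + y) z = g x z + g y z) ->
  (forall a x z, g (a *: x) z = a * g x z) ->
  (forall x y z, g z (x + y) = g z x + g z y) ->
  (forall a x z, g z (a *: x) = a^*%C * g z x) ->
  (forall x, complex.Im (g x x) = 0) -> forall u v, g v u = (g u v)^*%C.
Proof.
move=> addl scalel addr scaler real_diag u v.
have := real_diag (u + v); rewrite addl !addr !raddfD /= !real_diag.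
have := real_diag ('i%C *: u + v).
rewrite addl !addr !scalel !scaler !raddfD /= !(ImM, ReM, ReJ, ImJ) /= !real_diag.
move=> Im_iu Im_u; apply: complex_eq; rewrite ?ReJ ?ImJ; lra.
Qed.

Section AInnerProduct.
Variables (R : realType) (V : lmodType R[i]) (ip : V -> V -> R[i]) (A : V -> V).
Hypotheses (ip_inner : is_inner_product ip) (A_pos : positive_op ip A).

Let ip_linear : forall (a : R[i]) x y z, ip (a *: x + y) z = a * ip x z + ip y z.
Proof. by case: ip_inner. Qed.
Let ip_hermitian : forall x y, ip y x = (ip x y)^*%C.
Proof. by case: ip_inner. Qed.
Let ip_ge0 : forall x, complex.Im (ip x x) = 0 /\ 0 <= complex.Re (ip x x).
Proof. by case: ip_inner. Qed.
Let A_linear : forall (a : R[i]) x y, A (a *: x + y) = a *: A x + A y.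
Proof. by case: A_pos => [[]]. Qed.
Let A_ge0 : forall x, complex.Im (ip (A x) x) = 0 /\ 0 <= complex.Re (ip (A x) x).
Proof. by case: A_pos. Qed.

Local Notation fA := (ipA ip A).
(* convertible to [normA ip A] *)
Local Notation nA := (vnorm (ipA ip A)).

Lemma ipA_linear (a : R[i]) x y z : fA (a *: x + y) z = a * fA x z + fA y z.
Proof. by rewrite /ipA A_linear ip_linear. Qed.

Lemma ipA_hermitian x y : fA y x = (fA x y)^*%C.
Proof.
apply: hermitian_of_real_diag => [||||u]; first exact: sip_addl ipA_linear.
- exact: sip_scalel ipA_linear.
- by move=> *; rewrite /ipA (sip_addr ip_linear ip_hermitian).
- by move=> *; rewrite /ipA (sip_scaler ip_linear ip_hermitian).
- exact: (A_ge0 u).1.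
Qed.

Lemma normA_le_vnorm : exists k, forall u, nA u <= k * vnorm ip u.
Proof.
have [[_ [c Ac]] _] := A_pos; exists (Num.sqrt `|c|) => u.
have nip_ge0 := vnorm_ge0 ip.
apply: le_of_sqr_le; first by rewrite mulr_ge0 ?sqrtr_ge0.
rewrite (sqr_vnorm A_ge0 u) exprMn sqr_sqrtr // expr2 mulrA.
apply: le_trans (Re_sip_le ip_linear ip_hermitian ip_ge0 _ _) _.
apply: ler_wpM2r; first exact: nip_ge0.
exact: le_trans (Ac u) (ler_wpM2r (nip_ge0 u) (ler_norm c)).
Qed.

Lemma bounded_wrt_normA_adjoint (X Y : V -> V) :
  (forall x y, fA (X x) y = fA x (Y y)) ->
  bounded_wrt (vnorm ip) X -> bounded_wrt (vnorm ip) Y -> bounded_wrt nA X.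
Proof.
have [k nA_le] := normA_le_vnorm.
exact: (vnorm_adjoint_bounded ipA_linear ipA_hermitian A_ge0 (vnorm_ge0 ip) nA_le).
Qed.

Lemma in_BA_bounded (T : V -> V) : in_BA ip A T -> bounded_wrt nA T.
Proof.
move=> [[_ bT] [T' [[_ bT'] T_adj]]].
exact: (bounded_wrt_normA_adjoint T_adj (bounded_wrtP (vnorm_ge0 ip) bT)
                                    (bounded_wrtP (vnorm_ge0 ip) bT')).
Qed.

Lemma is_Asharp_bounded (T X : V -> V) :
  in_BA ip A T -> is_Asharp ip A T X -> bounded_wrt nA X.
Proof.
move=> [[_ bT] _] [[_ bX] X_adj _].
exact: (bounded_wrt_normA_adjoint X_adj (bounded_wrtP (vnorm_ge0 ip) bX)
                                    (bounded_wrtP (vnorm_ge0 ip) bT)).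
Qed.

Lemma cmod_le_omegaA (X : V -> V) x :
  bounded_wrt nA X -> nA x = 1 -> cmod (fA (X x) x) <= omegaA ip A X.
Proof.
move=> [c _ Xc] x1; apply: ub_le_sup; last by exists x.
exists c => _ [z z1 <-]; have {}z1 : nA z = 1 := z1.
apply: le_trans (cauchy_schwarz ipA_linear ipA_hermitian A_ge0 _ _) _.
by have := Xc z; rewrite z1 !mulr1.
Qed.

Lemma sqr_cmod_le_omegaA (X : V -> V) x :
  bounded_wrt nA X -> nA x = 1 -> cmod (fA (X x) x) ^+ 2 <= omegaA ip A X ^+ 2.
Proof.
move=> bX x1; have le_omega := cmod_le_omegaA bX x1.
by rewrite !expr2; exact: (ler_pM (cmod_ge0 _) (cmod_ge0 _) le_omega le_omega).
Qed.

Lemma normA_le_opnormA (X : V -> V) x :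
  bounded_wrt nA X -> nA x = 1 -> nA (X x) <= opnormA ip A X.
Proof.
move=> [c _ Xc] x1; apply: ub_le_sup; last by exists x.
exists c => _ [z z1 <-]; have {}z1 : nA z = 1 := z1.
by have := Xc z; rewrite z1 mulr1.
Qed.

Lemma omegaA_le_sqrt (X : V -> V) (c : R) :
  (forall x, nA x = 1 -> cmod (fA (X x) x) ^+ 2 <= c) -> omegaA ip A X <= Num.sqrt c.
Proof.
move=> X_le; rewrite /omegaA; set E := (Y in sup Y).
have [[_ [y y1 _]]|/nonemptyPn->] := pselect (E !=set0)%classic; last by rewrite sup0 sqrtr_ge0.
have c_ge0 : 0 <= c := le_trans (sqr_ge0 _) (X_le y y1).
apply: ge_sup; first by exists (cmod (fA (X y) y)), y.
move=> _ [x x1 <-]; apply: le_of_sqr_le; first exact: sqrtr_ge0.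
by rewrite [Num.sqrt c ^+ 2]sqr_sqrtr //; exact: X_le.
Qed.

Lemma bounded_wrt_normA_add (X Y : V -> V) :
  bounded_wrt nA X -> bounded_wrt nA Y -> bounded_wrt nA (fun u => X u + Y u).
Proof. exact: bounded_wrt_add (vnormD ipA_linear ipA_hermitian A_ge0). Qed.

End AInnerProduct.

Theorem theorem3p6 (R : realType) (V : lmodType R[i]) (ip : V -> V -> R[i])
  (A T S Tsh Ssh : V -> V) :
  is_hilbert ip ->
  positive_op ip A -> (exists x : V, A x != 0) ->
  in_BA ip A T -> in_BA ip A S ->
  is_Asharp ip A T Tsh -> is_Asharp ip A S Ssh ->
  omegaA ip A (fun x => T x + S x) <=
  Num.sqrt (omegaA ip A T ^+ 2 + omegaA ip A S ^+ 2
            + 2^-1 * opnormA ip A (fun x => Tsh (T x) + S (Ssh x))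
            + omegaA ip A (fun x => S (T x))).
Proof.
move=> [ip_inner _] A_pos _ T_BA S_BA Tsh_sharp Ssh_sharp.
have bT := in_BA_bounded ip_inner A_pos T_BA.
have bS := in_BA_bounded ip_inner A_pos S_BA.
have bTsh := is_Asharp_bounded ip_inner A_pos T_BA Tsh_sharp.
have bSsh := is_Asharp_bounded ip_inner A_pos S_BA Ssh_sharp.
have [[_ Tsh_adj _] [_ Ssh_adj _]] := (Tsh_sharp, Ssh_sharp).
apply: omegaA_le_sqrt => x x1.
have Re_x1 : complex.Re (ipA ip A x x) = 1 by rewrite -(sqr_vnorm A_pos.2) x1 expr1n.
apply: le_trans (sqr_cmod_sum_le (ipA_linear ip_inner A_pos) (ipA_hermitian ip_inner A_pos)
                   A_pos.2 Re_x1 Tsh_adj Ssh_adj) _.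
have := sqr_cmod_le_omegaA ip_inner A_pos bT x1.
have := sqr_cmod_le_omegaA ip_inner A_pos bS x1.
have := cmod_le_omegaA ip_inner A_pos (bounded_wrt_comp bT bS) x1.
have := normA_le_opnormA
  (bounded_wrt_normA_add ip_inner A_pos (bounded_wrt_comp bT bTsh) (bounded_wrt_comp bSsh bS)) x1.
lra.
Qed.
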